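(* Let $k\ge 7$ be an integer and $r=(\log k)^2/k$ (natural logarithm). For $\delta\in[0,1]$ let $g(\delta)=k\delta(1-\delta)^{k-1}$ and \[ \gamma(\delta)=\frac{g(\delta)^{r}}{\delta^{\delta}(1-\delta)^{1-\delta}} \] (with the convention $0^0=1$). Then $\max_{\delta\in[0,1]}\gamma(\delta)<1$. *)

From mathcomp Require Import all_boot all_order all_algebra.
From mathcomp Require Import all_classical all_reals all_analysis.
Set Implicit Arguments. Unset Strict Implicit. Unset Printing Implicit Defensive.
Import Order.TTheory GRing.Theory Num.Theory.
Local Open Scope ring_scope.

Definition rk {R : realType} (k : nat) : R := (ln (k%:R : R)) ^+ 2 / k%:R.

Definition gk {R : realType} (k : nat) (d : R) : R :=
  k%:R * d * (1 - d) ^+ (k - 1).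

(* gamma(delta) = g(delta)^r / (delta^delta (1-delta)^(1-delta));
   powR implements the convention 0 `^ 0 = 1 (and 0 `^ x = 0 for x <> 0). *)
Definition gammak {R : realType} (k : nat) (d : R) : R :=
  (gk k d) `^ (rk k) / (d `^ d * (1 - d) `^ (1 - d)).

(* Put L = ln k and t = 1/k, so that r = L^2 t, and m = -ln(1 - d).  On ]0,1[,
   ln gamma(d) = r L + r ln d - r (k - 1) m - d ln d + (1 - d) m, and the bounds
   2(y - 1)/(y + 1) <= ln y <= (y - 1/y)/2 for y >= 1 squeeze m between
   d + d^2/2 and (d - d^2/2)/(1 - d).  If d >= r then ln d >= -L and ln gamma < 0
   reduces to L + 1 < L^2 (1 - t), true since L >= ln 7 >= 1.9.  If d = x t with
   x < L^2, bounding ln x by (x - 1/x)/2 reduces ln gamma < 0 to the negativity of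
   a cubic in x which is convex in t, hence only needs checking at t = 0 and
   t = 1/7.  Finally gamma is continuous on [0,1] and vanishes at both ends, so it
   attains its maximum, which is 0 or exp (ln gamma(d)) < 1. *)

From mathcomp Require Import all_boot all_order all_algebra.
From mathcomp Require Import all_classical all_reals all_analysis.
From mathcomp Require Import ring lra.
Import Order.TTheory GRing.Theory Num.Theory.
Import numFieldNormedType.Exports.
Set Implicit Arguments. Unset Strict Implicit.
Local Open Scope ring_scope.

Section log_bounds.
Local Open Scope classical_set_scope.
Variable R : realType.

Lemma le_of_derive_ge0 (f f' : R -> R) (a b : R) : a <= b ->
  (forall z, a <= z <= b -> is_derive z 1 f (f' z)) ->
  (forall z, a < z < b -> 0 <= f' z) -> f a <= f b.
Proof.
move=> ab df f'_ge0.
have hd z : z \in `]a, b[%R -> derivable f z 1.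
  by rewrite in_itv /= => /andP[az zb]; case: (df z); rewrite ?(ltW az) ?(ltW zb).
have hp z : z \in `]a, b[%R -> 0 <= derive1 f z.
  rewrite in_itv /= => /andP[az zb].
  rewrite derive1E; have [] := df z; rewrite ?(ltW az) ?(ltW zb) // => _ ->.
  by apply: f'_ge0; rewrite az zb.
have hc : {within `[a, b], continuous f}.
  apply: continuous_in_subspaceT => z; rewrite inE /= in_itv /= => zab.
  apply: differentiable_continuous; apply/derivable1_diffP.
  by case: (df z zab).
exact: (ger0_derive1_ndecr hd hp hc (lexx a) ab (lexx b)).
Qed.

Lemma ln_le_half_sub_inv (y : R) : 1 <= y -> ln y <= (y - y^-1) / 2.
Proof.
move=> y1; rewrite -subr_ge0.
have : (1 - 1^-1) / 2 - ln 1 <= (y - y^-1) / 2 - ln y.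
  apply: (@le_of_derive_ge0 (fun z : R => (z - z^-1) / 2 - ln z)
          (fun z => (1 + z ^- 2) / 2 - z^-1)) => // z.
    move=> /andP[z1 _]; have z0 : 0 < z by lra.
    apply: is_derive_eq.
    apply: is_deriveB; last exact: is_derive1_ln.
    apply: is_deriveM; apply: is_deriveB; apply: is_deriveV; first by rewrite gt_eqF.
    by rewrite /GRing.scale /=; field; rewrite gt_eqF.
  move=> /andP[z1 _]; have z0 : 0 < z by lra.
  have -> : (1 + z ^- 2) / 2 - z^-1 = (1 - z^-1) ^+ 2 / 2.
    by field; rewrite gt_eqF.
  by rewrite divr_ge0 ?sqr_ge0.
by rewrite ln1 subr0 (@invr1 R) subrr mul0r.
Qed.

Lemma ln_ge_2sub1_div (y : R) : 1 <= y -> 2 * (y - 1) / (y + 1) <= ln y.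
Proof.
move=> y1; rewrite -subr_ge0.
have : ln 1 - 2 * (1 - 1) / (1 + 1) <= ln y - 2 * (y - 1) / (y + 1).
  apply: (@le_of_derive_ge0 (fun z : R => ln z - 2 * (z - 1) / (z + 1))
          (fun z => z^-1 - 4 / (z + 1) ^+ 2)) => // z.
    move=> /andP[z1 _]; have z0 : 0 < z by lra.
    apply: is_derive_eq.
    apply: is_deriveB; first exact: is_derive1_ln.
    apply: is_deriveM; apply: is_deriveV; first by rewrite gt_eqF //; lra.
    by rewrite /GRing.scale /=; field; rewrite !gt_eqF //; lra.
  move=> /andP[z1 _]; have z0 : 0 < z by lra.
  have -> : z^-1 - 4 / (z + 1) ^+ 2 = (z - 1) ^+ 2 / (z * (z + 1) ^+ 2).
    by field; rewrite !gt_eqF //; lra.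
  by rewrite divr_ge0 ?sqr_ge0 // mulr_ge0 ?sqr_ge0 // ltW.
by rewrite ln1 !subrr mulr0 mul0r subr0.
Qed.

Lemma ln_sub_ge (p q : R) : 0 < p -> p <= q -> 2 * (q - p) <= (q + p) * (ln q - ln p).
Proof.
move=> p0 pq; have q0 : 0 < q by exact: lt_le_trans pq.
have qp1 : 1 <= q / p by rewrite ler_pdivlMr // mul1r.
have := ln_ge_2sub1_div qp1; rewrite ln_div ?posrE //.
have -> : 2 * (q / p - 1) / (q / p + 1) = 2 * (q - p) / (q + p).
  by field; rewrite !gt_eqF //; lra.
by rewrite ler_pdivrMr ?[_ * (q + p)]mulrC //; lra.
Qed.

Lemma ln7_ge : 19 / 10 <= ln (7 : R).
Proof.
(* 2/3 + 2/5 + 1/2 + 1/3 = 19/10 *)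
have h12 : 2 * (2 - 1) <= (2 + 1) * (ln (2 : R) - ln 1) by apply: ln_sub_ge; lra.
have h23 : 2 * (3 - 2) <= (3 + 2) * (ln (3 : R) - ln 2) by apply: ln_sub_ge; lra.
have h35 : 2 * (5 - 3) <= (5 + 3) * (ln (5 : R) - ln 3) by apply: ln_sub_ge; lra.
have h57 : 2 * (7 - 5) <= (7 + 5) * (ln (7 : R) - ln 5) by apply: ln_sub_ge; lra.
rewrite ln1 in h12; lra.
Qed.

Lemma neg_ln1B_ge (y : R) : 0 <= y < 1 -> y + y ^+ 2 / 2 <= - ln (1 - y).
Proof.
move=> /andP[y0 y1]; have u0 : 0 < 1 - y by lra.
have Y1 : 1 <= (1 - y)^-1 by rewrite invf_ge1 //; lra.
have := ln_ge_2sub1_div Y1; rewrite lnV ?posrE //.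
have -> : 2 * ((1 - y)^-1 - 1) / ((1 - y)^-1 + 1) = 2 * y / (2 - y).
  by field; rewrite !gt_eqF //; lra.
rewrite ler_pdivrMr; last lra.
nra.
Qed.

Lemma neg_ln1B_le (y : R) : 0 <= y < 1 -> (1 - y) * - ln (1 - y) <= y - y ^+ 2 / 2.
Proof.
move=> /andP[y0 y1]; have u0 : 0 < 1 - y by lra.
have Y1 : 1 <= (1 - y)^-1 by rewrite invf_ge1 //; lra.
have -> : y - y ^+ 2 / 2 = (1 - y) * (((1 - y)^-1 - (1 - y)^-1^-1) / 2).
  by rewrite invrK; field; rewrite gt_eqF.
by rewrite ler_pM2l // -lnV ?posrE // ln_le_half_sub_inv.
Qed.

Lemma xlnx_gtN1 (y : R) : 0 < y -> -1 < y * ln y.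
Proof.
move=> y0; have yV0 : 0 < y^-1 by rewrite invr_gt0.
have := ln_sublinear yV0; rewrite lnV ?posrE // -(ltr_pM2l y0).
rewrite mulfV ?gt_eqF // mulrN; lra.
Qed.

End log_bounds.

Section log_gamma_form.
Variable R : realFieldType.

(* ln gamma(d) in the variables L = ln k, t = 1/k, a = ln d and m = -ln(1 - d). *)
Definition log_gamma_form (L t y a m : R) :=
  L ^+ 3 * t + L ^+ 2 * t * a - L ^+ 2 * (1 - t) * m - y * a + (1 - y) * m.

(* 2x times the bound on (ln gamma)/t at d = x t obtained from ln x <= (x - 1/x)/2. *)
Definition small_delta_poly (L t x : R) :=
  (L ^+ 2 - x) * (x ^+ 2 - 1) - 2 * x ^+ 2 * (L ^+ 2 * (1 - t) - L - 1)
  - (L ^+ 2 * (1 - t) + 1) * t * x ^+ 3.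

Lemma small_delta_poly_at0 (L x : R) :
  19 / 10 <= L -> 1 <= x -> small_delta_poly L 0 x < 0.
Proof.
move=> hL hx; have x1_ge0 : 0 <= x - 1 by lra.
have x2_ge1 : 1 <= x ^+ 2 by nra.
(* the value at L = 19/10; the difference is (L - 19/10) times a nonpositive factor *)
have cubic_lt0 : - x ^+ 3 + 219 / 100 * x ^+ 2 + x - 361 / 100 < 0.
  have := mulr_ge0 x1_ge0 (sqr_ge0 (x - 1 - 66 / 100)); nra.
have : (L - 19 / 10) * (2 * x ^+ 2 - (x ^+ 2 + 1) * (L + 19 / 10)) <= 0.
  by apply: mulr_ge0_le0; nra.
rewrite /small_delta_poly; nra.
Qed.

Lemma small_delta_poly_at_seventh (L x : R) :
  19 / 10 <= L -> 1 <= x -> small_delta_poly L (1 / 7) x < 0.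
Proof.
move=> hL hx; have x1_ge0 : 0 <= x - 1 by lra.
have x2_ge1 : 1 <= x ^+ 2 by nra.
have x3_ge0 : 0 <= x ^+ 3 by rewrite exprn_ge0 //; lra.
have cubic_lt0 : (361 / 100 - x) * (x ^+ 2 - 1) - 2 * x ^+ 2 * (6 / 7 * (361 / 100) - 19 / 10 - 1)
                 - (6 / 7 * (361 / 100) + 1) / 7 * x ^+ 3 < 0.
  have := mulr_ge0 x1_ge0 (sqr_ge0 (x - 1 - 1 / 2)); nra.
set a := - (5 / 7) * x ^+ 2 - 1 - 6 / 49 * x ^+ 3.
have a_le : a * (L + 19 / 10) <= - (5 / 7) * x ^+ 2 * (L + 19 / 10).
  by apply: ler_wpM2r; rewrite /a; lra.
have : (L - 19 / 10) * (a * (L + 19 / 10) + 2 * x ^+ 2) <= 0.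
  by apply: mulr_ge0_le0; nra.
rewrite /small_delta_poly /a; nra.
Qed.

Lemma small_delta_poly_lt0 (L t x : R) :
  19 / 10 <= L -> 0 <= t <= 1 / 7 -> 1 <= x -> small_delta_poly L t x < 0.
Proof.
move=> hL /andP[t0 t7] hx.
have := small_delta_poly_at0 hL hx; have := small_delta_poly_at_seventh hL hx.
(* the coefficient of t^2 is L^2 x^3 >= 0 *)
have -> : small_delta_poly L t x = (1 - 7 * t) * small_delta_poly L 0 x
    + 7 * t * small_delta_poly L (1 / 7) x + L ^+ 2 * x ^+ 3 * (t * (t - 1 / 7)).
  by rewrite /small_delta_poly; field.
have : L ^+ 2 * x ^+ 3 * (t * (t - 1 / 7)) <= 0.
  by apply: mulr_ge0_le0; [rewrite mulr_ge0 // exprn_ge0 //; lra | nra].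
nra.
Qed.

Lemma addL1_lt_exponent (L t : R) : 19 / 10 <= L -> 0 < t <= 1 / 7 ->
  L + 1 < L ^+ 2 * (1 - t).
Proof.
move=> L_ge /andP[t_gt0 t_le].
have : 6 / 7 * L ^+ 2 <= L ^+ 2 * (1 - t) by nra.
nra.
Qed.

Lemma log_gamma_form_lt0_large (L t y a m : R) : 19 / 10 <= L -> 0 < t <= 1 / 7 ->
  0 < y < 1 -> L ^+ 2 * t <= y -> - L <= a ->
  y + y ^+ 2 / 2 <= m -> (1 - y) * m <= y - y ^+ 2 / 2 ->
  log_gamma_form L t y a m < 0.
Proof.
move=> L_ge t_bd /andP[y0 y1] ry La m_ge m_le.
have := addL1_lt_exponent L_ge t_bd; set s := L ^+ 2 * (1 - t) => s_gt.
have : 0 <= (y - L ^+ 2 * t) * (a + L) by apply: mulr_ge0; lra.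
have : 0 <= s * (m - y - y ^+ 2 / 2) by apply: mulr_ge0; lra.
have : 0 < y * (s - L - 1) by apply: mulr_gt0; lra.
have : 0 <= (s + 1) * y ^+ 2 by apply: mulr_ge0; [lra | exact: sqr_ge0].
rewrite /log_gamma_form -/s; nra.
Qed.

Lemma small_delta_bound_lt0 (L t x b : R) : 19 / 10 <= L -> 0 < t <= 1 / 7 ->
  0 < x < L ^+ 2 -> (x <= 1 -> b <= 0) -> (1 <= x -> b <= (x - x^-1) / 2) ->
  (L ^+ 2 - x) * b + x * L - L ^+ 2 * (1 - t) * (x + x ^+ 2 * t / 2) + x - x ^+ 2 * t / 2 < 0.
Proof.
move=> L_ge t_bd /andP[x0 xL] b_le0 b_le.
have := addL1_lt_exponent L_ge t_bd; set s := L ^+ 2 * (1 - t) => s_gt.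
have /andP[t_gt0 t_le] := t_bd.
have : 0 <= (s + 1) * x ^+ 2 * t.
  by rewrite mulr_ge0 ?mulr_ge0 ?sqr_ge0 //; lra.
have : 0 < x * (s - L - 1) by apply: mulr_gt0; lra.
have [x_le1 | x_gt1] := lerP x 1.
  have : (L ^+ 2 - x) * b <= 0 by apply: mulr_ge0_le0; [lra | exact: b_le0].
  nra.
have x_ge1 : 1 <= x by lra.
have : (L ^+ 2 - x) * b <= (L ^+ 2 - x) * ((x - x^-1) / 2).
  by apply: ler_wpM2l; [lra | exact: b_le].
have : small_delta_poly L t x < 0.
  by apply: small_delta_poly_lt0 => //; rewrite t_le ltW.
have -> : small_delta_poly L t x = 2 * x * ((L ^+ 2 - x) * ((x - x^-1) / 2)
    - x * (s - L - 1) - (s + 1) * t * x ^+ 2 / 2).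
  by rewrite /small_delta_poly /s; field; rewrite gt_eqF.
rewrite pmulr_rlt0; last lra.
nra.
Qed.

Lemma log_gamma_form_lt0_small (L t x b m : R) : 19 / 10 <= L -> 0 < t <= 1 / 7 ->
  0 < x < L ^+ 2 -> (x <= 1 -> b <= 0) -> (1 <= x -> b <= (x - x^-1) / 2) ->
  x * t + (x * t) ^+ 2 / 2 <= m -> (1 - x * t) * m <= x * t - (x * t) ^+ 2 / 2 ->
  log_gamma_form L t (x * t) (b - L) m < 0.
Proof.
move=> L_ge t_bd xL b_le0 b_le m_ge m_le.
have := small_delta_bound_lt0 L_ge t_bd xL b_le0 b_le.
have : 0 <= L ^+ 2 * (1 - t) * (m - x * t - (x * t) ^+ 2 / 2) by apply: mulr_ge0; nra.
rewrite /log_gamma_form; nra.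
Qed.

End log_gamma_form.

Section log_gamma.
Variable R : realType.

Definition log_gamma (k : nat) (y : R) :=
  rk k * (ln (k%:R : R) + ln y + (k%:R - 1) * ln (1 - y))
  - (y * ln y + (1 - y) * ln (1 - y)).

Lemma gammakE (k : nat) (y : R) : (1 <= k)%N -> 0 < y < 1 ->
  gammak k y = expR (log_gamma k y).
Proof.
move=> k1 /andP[y0 y1]; have u0 : 0 < 1 - y by rewrite subr_gt0.
have k0 : 0 < (k%:R : R) by rewrite ltr0n.
have gk0 : 0 < gk k y by rewrite /gk !mulr_gt0 // exprn_gt0.
rewrite /gammak /powR !gt_eqF // /gk lnM ?posrE ?mulr_gt0 ?exprn_gt0 //.
rewrite lnM ?posrE // lnXn // -[ln (1 - y) *+ _]mulr_natr natrB //.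
by rewrite /log_gamma -expRD -expRN -expRD; congr expR; ring.
Qed.

Lemma log_gammaE (k : nat) (y : R) : (1 <= k)%N ->
  log_gamma k y = log_gamma_form (ln (k%:R : R)) k%:R^-1 y (ln y) (- ln (1 - y)).
Proof.
move=> k1; have k0 : (k%:R : R) != 0 by rewrite pnatr_eq0 -lt0n.
by rewrite /log_gamma /rk /log_gamma_form; field.
Qed.

Lemma log_gamma_lt0 (k : nat) (y : R) : (7 <= k)%N -> 0 < y < 1 -> log_gamma k y < 0.
Proof.
move=> k7 y01; have /andP[y0 y1] := y01.
have K7 : 7 <= (k%:R : R) by rewrite ler_nat.
rewrite log_gammaE ?(leq_trans _ k7) //.
set K : R := k%:R; set L := ln K; set t := K^-1.
have K0 : 0 < K by lra.
have L_ge : 19 / 10 <= L.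
  by apply: (le_trans (ln7_ge R)); rewrite /L ler_ln ?posrE //; lra.
have t_gt0 : 0 < t by rewrite invr_gt0.
have t_bd : 0 < t <= 1 / 7 by rewrite t_gt0 /t div1r lef_pV2 ?posrE //; lra.
have y01' : 0 <= y < 1 by rewrite (ltW y0) y1.
have m_ge := neg_ln1B_ge y01'; have m_le := neg_ln1B_le y01'.
have [ry | yr] := lerP (L ^+ 2 * t) y.
  apply: log_gamma_form_lt0_large => //.
  have -> : - L = ln t by rewrite /t lnV ?posrE //; lra.
  rewrite ler_ln ?posrE //; apply: le_trans ry; rewrite ler_peMl //; nra.
have tK : K * t = 1 by rewrite mulfV // gt_eqF.
set x := y * K.
have -> : ln y = ln x - L by rewrite lnM ?posrE // /L addrK.
have yE : y = x * t by rewrite /x -mulrA tK mulr1.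
rewrite yE in yr m_ge m_le *.
apply: log_gamma_form_lt0_small => //.
- by rewrite mulr_gt0 //= -(ltr_pM2r t_gt0).
- by move=> x1; apply: ln_le0.
- exact: ln_le_half_sub_inv.
Qed.

Lemma rk_gt0 (k : nat) : (2 <= k)%N -> 0 < rk k :> R.
Proof.
move=> k2; have K1 : 1 < (k%:R : R) by rewrite ltr1n.
by rewrite /rk divr_gt0 ?exprn_gt0 ?ln_gt0 //; lra.
Qed.

Lemma gammak0 (k : nat) : (2 <= k)%N -> gammak k (0 : R) = 0.
Proof.
move=> k2; rewrite /gammak /gk mulr0 mul0r (@powR0 _ (rk k)) ?mul0r //.
by apply: lt0r_neq0; apply: rk_gt0.
Qed.

Lemma gammak1 (k : nat) : (2 <= k)%N -> gammak k (1 : R) = 0.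
Proof.
move=> k2; rewrite /gammak /gk subrr expr0n subn_eq0 leqNgt k2 mulr0 (@powR0 _ (rk k)) ?mul0r //.
by apply: lt0r_neq0; apply: rk_gt0.
Qed.

Lemma log_gamma_le_ln (k : nat) (y : R) : (2 <= k)%N -> 0 < y < 1 ->
  log_gamma k y <= rk k * ln (k%:R : R) + 2 + rk k * ln y.
Proof.
move=> k2 /andP[y0 y1]; have u0 : 0 < 1 - y by lra.
have r_gt0 := rk_gt0 k2.
have := xlnx_gtN1 y0; have := xlnx_gtN1 u0.
have K1 : 1 <= (k%:R : R) by rewrite ler1n (leq_trans _ k2).
have ln1B_le0 : ln (1 - y) <= 0 by apply: ln_le0; lra.
have : 0 <= rk k * ((k%:R - 1) * - ln (1 - y)) by apply: mulr_ge0; [lra | apply: mulr_ge0; lra].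
rewrite /log_gamma; lra.
Qed.

Lemma log_gamma_le_ln1B (k : nat) (y : R) : (2 <= k)%N -> 0 < y < 1 ->
  log_gamma k y <= rk k * ln (k%:R : R) + 2 + rk k * ln (1 - y).
Proof.
move=> k2 /andP[y0 y1]; have u0 : 0 < 1 - y by lra.
have r_gt0 := rk_gt0 k2.
have := xlnx_gtN1 y0; have := xlnx_gtN1 u0.
have K2 : 2 <= (k%:R : R) by rewrite ler_nat.
have ln1B_le0 : ln (1 - y) <= 0 by apply: ln_le0; lra.
have lny_le0 : ln y <= 0 by apply: ln_le0; lra.
have : 0 <= rk k * ((k%:R - 2) * - ln (1 - y)) by apply: mulr_ge0; [lra | apply: mulr_ge0; lra].
have : 0 <= rk k * - ln y by apply: mulr_ge0; lra.
rewrite /log_gamma; lra.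
Qed.

End log_gamma.

Section gammak_continuous.
Local Open Scope classical_set_scope.
Variable R : realType.

Lemma log_gamma_continuous (k : nat) (z : R) : 0 < z < 1 ->
  {for z, continuous (log_gamma k)}.
Proof.
move=> /andP[z0 z1]; have u0 : 0 < 1 - z by lra.
have ln_cvg : ln y @[y --> z] --> ln z := continuous_ln z0.
have ln1B_cvg : ln (1 - y) @[y --> z] --> ln (1 - z).
  apply: (@cvg_comp _ _ _ (fun y : R => 1 - y) (@ln R) _ (nbhs (1 - z))).
    by apply: cvgB; [exact: cvg_cst | exact: cvg_id].
  exact: continuous_ln.
apply: cvgB.
  apply: cvgMl_tmp; apply: cvgD; first by apply: cvgD; [exact: cvg_cst | exact: ln_cvg].
  exact: cvgMl_tmp.
apply: cvgD; first by apply: cvgM; [exact: cvg_id | exact: ln_cvg].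
by apply: cvgM => //; apply: cvgB; [exact: cvg_cst | exact: cvg_id].
Qed.

Lemma gammak_continuous_itv (k : nat) (z : R) : (1 <= k)%N -> 0 < z < 1 ->
  {for z, continuous (gammak k)}.
Proof.
move=> k1 z01; have /andP[z0 z1] := z01.
have near_gammakE : \forall y \near z, expR (log_gamma k y) = gammak k y.
  near=> y; rewrite gammakE //; apply/andP; split; near: y.
  - exact: lt_nbhsr.
  - exact: lt_nbhsl.
have exp_cvg : expR (log_gamma k y) @[y --> z] --> gammak k z.
  rewrite gammakE //; apply: (@cvg_comp _ _ _ (log_gamma k) expR _ (nbhs (log_gamma k z))).
    exact: log_gamma_continuous.
  exact: continuous_expR.
exact: cvg_trans (near_eq_cvg near_gammakE) exp_cvg.
Unshelve. all: by end_near.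
Qed.

Lemma gammak_cvg0 (k : nat) : (2 <= k)%N -> gammak k y @[y --> (0 : R)^'+] --> 0.
Proof.
move=> k2; set C := expR (rk k * ln (k%:R : R) + 2).
apply: (@squeeze_cvgr _ _ _ _ (fun=> 0) (fun y => C * y `^ rk k)); last 2 first.
- exact: cvg_cst.
- have := cvgMl_tmp (a := C) (powR_cvg0 (rk_gt0 R k2)); rewrite mulr0; exact.
near=> y; have y01 : 0 < y < 1.
  apply/andP; split; near: y; [exact: nbhs_right_gt | exact: nbhs_right_lt].
rewrite gammakE ?expR_ge0 ?(leq_trans _ k2) //= /C /powR gt_eqF; last by case/andP: y01.
by rewrite -expRD ler_expR log_gamma_le_ln.
Unshelve. all: by end_near.
Qed.

Lemma gammak_cvg1 (k : nat) : (2 <= k)%N -> gammak k y @[y --> (1 : R)^'-] --> 0.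
Proof.
move=> k2; set C := expR (rk k * ln (k%:R : R) + 2).
apply: (@squeeze_cvgr _ _ _ _ (fun=> 0) (fun y => C * (1 - y) `^ rk k)); last 2 first.
- exact: cvg_cst.
- have shift_cvg : (1 - y) @[y --> (1 : R)^'-] --> (1 - 1 : R).
    by apply: cvg_at_left_filter; apply: cvgB; [exact: cvg_cst | exact: cvg_id].
  have pow_cvg : C * y `^ rk k @[y --> (1 - 1 : R)^'+] --> 0.
    rewrite subrr; have := cvgMl_tmp (a := C) (powR_cvg0 (rk_gt0 R k2)); rewrite mulr0; exact.
  have shift_decr : {in Interval -oo%O (BRight (1 : R)) &,
      {homo (fun y : R => 1 - y) : a b /~ a < b}}.
    by move=> a b _ _ ab; rewrite ltrD2l ltrN2.
  exact: (decreasing_cvg_at_left_comp _ shift_decr shift_cvg pow_cvg).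
near=> y; have y01 : 0 < y < 1.
  apply/andP; split; near: y; [exact: nbhs_left_gt | exact: nbhs_left_lt].
rewrite gammakE ?expR_ge0 ?(leq_trans _ k2) //= /C /powR gt_eqF; last by case/andP: y01; lra.
by rewrite -expRD ler_expR log_gamma_le_ln1B.
Unshelve. all: by end_near.
Qed.

Lemma gammak_continuous (k : nat) : (2 <= k)%N ->
  {within `[0, 1], continuous (gammak (R := R) k)}.
Proof.
move=> k2; apply/continuous_within_itvP; first exact: ltr01.
split; last 2 first.
- by rewrite gammak0 //; exact: gammak_cvg0.
- by rewrite gammak1 //; exact: gammak_cvg1.
move=> z; rewrite in_itv /=; exact: gammak_continuous_itv (leq_trans _ k2).
Qed.

End gammak_continuous.

Theorem mainTheorem5 (R : realType) (k : nat) (hk : (7 <= k)%N) :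
  exists d0 : R, 0 <= d0 <= 1 /\
    (forall d : R, 0 <= d <= 1 -> gammak k d <= gammak k d0) /\
    gammak k d0 < 1.
Proof.
have k2 : (2 <= k)%N by exact: leq_trans hk.
have [c c01 c_max] := EVT_max ler01 (gammak_continuous (R := R) k2).
move: c01; rewrite in_itv /= => c01.
exists c; split=> //; split=> [d d01 | ]; first by apply: c_max; rewrite in_itv.
have /andP[c0 c1] := c01.
have [-> | c_neq0] := eqVneq c 0; first by rewrite gammak0.
have [-> | c_neq1] := eqVneq c 1; first by rewrite gammak1.
have c_in : 0 < c < 1 by rewrite !lt_neqAle c0 c1 eq_sym c_neq0 c_neq1.
by rewrite gammakE ?expR_lt1 ?log_gamma_lt0 ?(leq_trans _ hk).
Qed.
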